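(* Let $W$ be a finite Weyl group with set $R$ of simple reflections, and for $r\in R$ let $\alpha_r$ be the corresponding simple root. Let $\tilde W=W\ltimes Z$ be the affine Weyl group. Suppose $a\in W_I$ for some $I\subseteq R$. If $(a,\mathbf u)\in\tilde W$ is an involution, with $\mathbf u=\sum_{r\in R}u_r\alpha_r$, then $a$ is an involution and $u_r=0$ whenever $r\notin I$. Moreover, let $J$ be the set of reflections $s\in R$ that commute with all $r\in I$. If $\mathbf v=\sum_{s\in J}v_s\alpha_s$, then $\mathbf v^b=\mathbf v$ for all $b\in W_I$.
   Context: $W$ has root system $\Phi$ in a Euclidean space $V$; $\alpha^\vee=2\alpha/\langle\alpha,\alpha\rangle$; $Z$ is the coroot lattice $L(\Phi^\vee)$ viewed as translations. $\tilde W$ consists of pairs $(a,\mathbf u)$, $a\in W$, $\mathbf u\in Z$, with multiplication $(a,\mathbf u)(b,\mathbf v)=(ab,\mathbf u^b+\mathbf v)$, where $\mathbf u\mapsto\mathbf u^b$ is the (right) linear action of $W$ on $V$, so that $\mathbf v^r=\mathbf v-\langle\mathbf v,\alpha_r\rangle\alpha_r^\vee$ for $r\in R$. $W_I$ is the standard parabolic subgroup generated by $I$. The coefficients $u_r,v_s$ are real numbers. *)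

From HB Require Import structures.
From mathcomp Require Import all_boot all_order all_algebra.
Set Implicit Arguments. Unset Strict Implicit. Unset Printing Implicit Defensive.
Import Order.TTheory GRing.Theory Num.Theory.
Local Open Scope ring_scope.

Section Weyl.
Variables (R : realFieldType) (n : nat).
Implicit Types (u v b : 'rV[R]_n) (x y : 'M[R]_n).

Definition dot u v : R := (u *m v^T) 0 0.

Definition coroot b : 'rV[R]_n := (2 / dot b b) *: b.

(* matrix of the reflection s_b acting on the right on row vectors:
   v *m refl b = v - <v,b> b^vee *)
Definition refl b : 'M[R]_n := 1%:M - b^T *m coroot b.

(* (finite, crystallographic, reduced) root system spanning V *)
Definition root_system (Phi : seq 'rV[R]_n) : Prop :=
  [/\ 0 \notin Phi,
      (forall v, exists c : 'I_(size Phi) -> R,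
          v = \sum_(i < size Phi) c i *: Phi`_i),
      (forall a b, a \in Phi -> b \in Phi -> b *m refl a \in Phi),
      (forall a b, a \in Phi -> b \in Phi ->
          exists k : int, dot b (coroot a) = k%:~R) &
      (forall a (c : R), a \in Phi -> c *: a \in Phi -> c = 1 \/ c = -1)].

Definition simple_system (Phi : seq 'rV[R]_n) (S : finType) (alpha : S -> 'rV[R]_n)
  : Prop :=
  [/\ (forall s, alpha s \in Phi),
      (forall c : S -> R, \sum_s c s *: alpha s = 0 -> forall s, c s = 0) &
      (forall b, b \in Phi -> exists k : S -> nat,
          b = \sum_s (k s)%:R *: alpha s \/ b = - \sum_s (k s)%:R *: alpha s)].

(* group generated by a set G of involutive matrices (products of generators) *)
Inductive gen (G : 'M[R]_n -> Prop) : 'M[R]_n -> Prop :=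
| gen_one : gen G 1%:M
| gen_mul x y : gen G x -> G y -> gen G (x *m y).

Definition in_W (Phi : seq 'rV[R]_n) x : Prop :=
  gen (fun y => exists2 b, b \in Phi & y = refl b) x.

Definition in_WI (S : finType) (alpha : S -> 'rV[R]_n) (I : {set S}) x : Prop :=
  gen (fun y => exists2 s, s \in I & y = refl (alpha s)) x.

Definition in_coroot_lattice (Phi : seq 'rV[R]_n) u : Prop :=
  exists c : 'I_(size Phi) -> int, u = \sum_(i < size Phi) (c i)%:~R *: coroot Phi`_i.

Definition aff_mul (p q : 'M[R]_n * 'rV[R]_n) : 'M[R]_n * 'rV[R]_n :=
  (p.1 *m q.1, p.2 *m q.1 + q.2).
Definition aff_one : 'M[R]_n * 'rV[R]_n := (1%:M, 0).

Definition in_affW (Phi : seq 'rV[R]_n) (p : 'M[R]_n * 'rV[R]_n) : Prop :=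
  in_W Phi p.1 /\ in_coroot_lattice Phi p.2.

Definition mx_involution x : Prop := x *m x = 1%:M /\ x <> 1%:M.
Definition aff_involution (p : 'M[R]_n * 'rV[R]_n) : Prop :=
  aff_mul p p = aff_one /\ p <> aff_one.

Definition Jset (S : finType) (alpha : S -> 'rV[R]_n) (I : {set S}) : {set S} :=
  [set s | (s \notin I) &&
     [forall r in I, refl (alpha s) *m refl (alpha r) == refl (alpha r) *m refl (alpha s)]].

End Weyl.

(* Squaring (a, u) gives (a^2, u^a + u), so a^2 = 1 and u^a = -u, and a = 1
   would force u = 0.  An element of W_I moves any vector only by a linear
   combination of the simple roots of I, so 2u = u - u^a lies in their span and
   the independence of the simple roots kills u_r for r outside I.  Reflections
   in two linearly independent roots commute only if the roots are orthogonal,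
   so every vector in the span of J is orthogonal to the simple roots of I,
   hence fixed by their reflections and therefore by W_I. *)

From HB Require Import structures.
From mathcomp Require Import all_boot all_order all_algebra ring.
Import Order.TTheory GRing.Theory Num.Theory.
Set Implicit Arguments.
Unset Strict Implicit.
Unset Printing Implicit Defensive.
Local Open Scope ring_scope.

Section Reflections.
Variables (R : realFieldType) (n : nat).
Implicit Types (u v a b : 'rV[R]_n).

Lemma dotDl u w v : dot (u + w) v = dot u v + dot w v.
Proof. by rewrite /dot mulmxDl mxE. Qed.

Lemma dotZl c u v : dot (c *: u) v = c * dot u v.
Proof. by rewrite /dot -scalemxAl mxE. Qed.

Lemma dotBl u w v : dot (u - w) v = dot u v - dot w v.
Proof. by rewrite dotDl -scaleN1r dotZl mulN1r. Qed.

Lemma dot_suml (I : finType) (P : pred I) (F : I -> 'rV[R]_n) v :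
  dot (\sum_(i | P i) F i) v = \sum_(i | P i) dot (F i) v.
Proof. by rewrite /dot mulmx_suml summxE. Qed.

Lemma dot_coroot v b : dot v (coroot b) = 2 / dot b b * dot v b.
Proof. by rewrite /dot /coroot linearZ /= -scalemxAr mxE. Qed.

Lemma dot_eq0 b : (dot b b == 0) = (b == 0).
Proof.
apply/eqP/eqP => [|->]; last by rewrite /dot mul0mx mxE.
rewrite /dot mxE => /psumr_eq0P sq_eq0; apply/rowP => j; rewrite mxE.
have /eqP : b 0 j * b^T j 0 = 0.
  by apply: sq_eq0 => // i _; rewrite mxE -expr2 sqr_ge0.
by rewrite mxE mulf_eq0 orbb => /eqP.
Qed.

Lemma mulmx_refl v b : v *m refl b = v - dot v (coroot b) *: b.
Proof.
rewrite /refl mulmxBr mulmx1 mulmxA [v *m b^T]mx11_scalar mul_scalar_mx.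
by rewrite dot_coroot /coroot scalerA mulrC.
Qed.

Lemma dot_coroot_self b : b != 0 -> dot b (coroot b) = 2.
Proof. by move=> b_neq0; rewrite dot_coroot mulfVK // dot_eq0. Qed.

Lemma mulmx_refl_self b : b != 0 -> b *m refl b = - b.
Proof.
move=> b_neq0; rewrite mulmx_refl dot_coroot_self //.
by rewrite scaler_nat mulr2n opprD addrA subrr add0r.
Qed.

Lemma mulmx_refl_orthogonal v b : dot v b = 0 -> v *m refl b = v.
Proof. by move=> vb0; rewrite mulmx_refl dot_coroot vb0 mulr0 scale0r subr0. Qed.

Lemma refl_commute_dot0 a b :
  (forall x y : R, x *: a + y *: b = 0 -> x = 0 /\ y = 0) ->
  refl a *m refl b = refl b *m refl a -> dot a b = 0.
Proof.
move=> ab_free ab_comm.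
have a_neq0 : a != 0.
  apply/eqP => a0; have [/eqP] : (1 : R) = 0 /\ (0 : R) = 0.
    by apply: ab_free; rewrite a0 scaler0 scale0r addr0.
  by rewrite oner_eq0.
have b_neq0 : b != 0.
  apply/eqP => b0; have [_ /eqP] : (0 : R) = 0 /\ (1 : R) = 0.
    by apply: ab_free; rewrite b0 scaler0 scale0r addr0.
  by rewrite oner_eq0.
set c := dot a (coroot b); set d := dot b (coroot a).
(* a s_a s_b = -a + c b and a s_b s_a = (c d - 1) a - c b, so 2 c b = c d a *)
have : a *m refl a *m refl b = a *m refl b *m refl a by rewrite -!mulmxA ab_comm.
rewrite mulmx_refl_self // mulNmx mulmx_refl -/c [a *m refl b]mulmx_refl -/c.
rewrite dotBl dotZl -/d dot_coroot_self // => /eqP; rewrite -subr_eq0 => /eqP.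
move=> ab_rel; have [_ /eqP] : - (c * d) = 0 /\ 2 * c = 0.
  by apply: ab_free; rewrite -ab_rel; apply/rowP => j; rewrite !mxE; ring.
rewrite mulf_eq0 pnatr_eq0 /= /c dot_coroot mulf_eq0 => /orP [|/eqP //].
by rewrite mulf_eq0 pnatr_eq0 invr_eq0 dot_eq0 (negPf b_neq0).
Qed.

Lemma gen_fixed (G : 'M[R]_n -> Prop) v x :
  (forall y, G y -> v *m y = v) -> gen G x -> v *m x = v.
Proof.
move=> G_fixed; elim=> [|y z _ vy Gz]; first by rewrite mulmx1.
by rewrite mulmxA vy G_fixed.
Qed.

End Reflections.

Section Parabolic.
Variables (R : realFieldType) (n : nat) (S : finType) (alpha : S -> 'rV[R]_n).

Lemma WI_mul_span I x : in_WI alpha I x -> forall v,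
  exists2 c : S -> R, (forall t, t \notin I -> c t = 0)
                    & v *m x = v + \sum_t c t *: alpha t.
Proof.
elim=> [|y _ _ IHy [s sI ->]] v.
  exists (fun _ => 0) => //.
  by rewrite mulmx1 big1 ?addr0 // => t _; rewrite scale0r.
have [c c_supp vy] := IHy v.
pose d := dot (v *m y) (coroot (alpha s)).
exists (fun t => if t == s then c t - d else c t).
  by move=> t tI; case: eqP => [ts | _]; [rewrite ts sI in tI | exact: c_supp].
rewrite mulmxA mulmx_refl -/d vy -addrA; congr (_ + _).
rewrite [RHS](bigD1 s) //= eqxx [in LHS](bigD1 s) //= scalerBl addrAC.
by congr (_ + _); apply: eq_bigr => t /negPf ->.
Qed.

Hypothesis alpha_free :
  forall c : S -> R, \sum_s c s *: alpha s = 0 -> forall s, c s = 0.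

Lemma alpha_pair_free s r : s != r ->
  forall x y : R, x *: alpha s + y *: alpha r = 0 -> x = 0 /\ y = 0.
Proof.
move=> sr x y xy0; have rs : (r == s) = false by rewrite eq_sym (negPf sr).
pose c t := if t == s then x else if t == r then y else 0.
have c_rel : \sum_t c t *: alpha t = 0.
  rewrite (bigD1 s) //= (bigD1 r) 1?eq_sym //= big1 ?addr0.
    by rewrite /c eqxx rs eqxx xy0.
  by move=> t /andP [/negPf ts /negPf tr]; rewrite /c ts tr scale0r.
split; first by have := alpha_free c_rel s; rewrite /c eqxx.
by have := alpha_free c_rel r; rewrite /c rs eqxx.
Qed.

Lemma WI_negated_coord_eq0 I x (ur : S -> R) : in_WI alpha I x ->
  (\sum_r ur r *: alpha r) *m x = - \sum_r ur r *: alpha r ->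
  forall r, r \notin I -> ur r = 0.
Proof.
set u := \sum_r _ => xWI ux r rI.
have [c c_supp ux_span] := WI_mul_span xWI u.
have rel : \sum_t (2 * ur t + c t) *: alpha t = 0.
  under eq_bigr do rewrite scalerDl -scalerA.
  rewrite big_split /= -scaler_sumr -/u scaler_nat mulr2n -addrA -ux_span ux.
  by rewrite addrN.
by have /eqP := alpha_free rel r; rewrite c_supp // addr0 mulf_eq0 pnatr_eq0 => /eqP.
Qed.

Lemma Jset_dot0 I s r : s \in Jset alpha I -> r \in I -> dot (alpha s) (alpha r) = 0.
Proof.
rewrite inE => /andP [sI /forallP /(_ r) comm] rI; move: comm; rewrite rI => /eqP.
by apply: refl_commute_dot0; apply: alpha_pair_free; apply: contraNneq sI => ->.
Qed.

Lemma WI_fixes_Jspan I (v : S -> R) x : in_WI alpha I x ->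
  (\sum_(s in Jset alpha I) v s *: alpha s) *m x = \sum_(s in Jset alpha I) v s *: alpha s.
Proof.
apply: gen_fixed => _ [r rI ->]; apply: mulmx_refl_orthogonal.
by rewrite dot_suml big1 // => s sJ; rewrite dotZl (Jset_dot0 sJ rI) mulr0.
Qed.

End Parabolic.

Theorem lemma2p8 (R : realFieldType) (n : nat) (Phi : seq 'rV[R]_n)
  (S : finType) (alpha : S -> 'rV[R]_n) (I : {set S})
  (a : 'M[R]_n) (u : 'rV[R]_n) (ur : S -> R) :
  root_system Phi -> simple_system Phi alpha ->
  in_WI alpha I a ->
  in_affW Phi (a, u) ->
  u = \sum_r ur r *: alpha r ->
  aff_involution (a, u) ->
  [/\ mx_involution a,
      (forall r, r \notin I -> ur r = 0) &
      (forall (v : S -> R) (b : 'M[R]_n), in_WI alpha I b ->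
         (\sum_(s in Jset alpha I) v s *: alpha s) *m b
           = \sum_(s in Jset alpha I) v s *: alpha s)].
Proof.
move=> _ [_ alpha_free _] aWI _ u_def [[aa1 uau] au_neq1].
have ua : u *m a = - u by apply/eqP; rewrite -addr_eq0 uau.
split=> [|r rI|v b]; last exact: WI_fixes_Jspan.
- split=> // a1; apply: au_neq1; rewrite /aff_one a1.
  have /eqP : 2%:R *: u = 0 by rewrite scaler_nat mulr2n -{1}(mulmx1 u) -a1 uau.
  by rewrite scaler_eq0 pnatr_eq0 => /eqP ->.
- by apply: (WI_negated_coord_eq0 alpha_free aWI) => //; rewrite -u_def.
Qed.
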